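(* Let $n\ge1$ and let $C$ be the $n\times n$ matrix with entries in $OPol_n$ whose $(i,i-1)$-entry is $1$ for $2\le i\le n$, whose $(i,n)$-entry is $(-1)^{n-i}e^{(n)}_{n+1-i}$ for $1\le i\le n$, and all other entries $0$ (the non-commutative companion matrix of $(t-x_1)\cdots(t-x_n)$). Then for all $1\le i,j\le n$ and $k\ge0$, the $(i,j)$-entry of $C^k$ (matrix multiplication in the given order in the non-commutative ring $OPol_n$) equals $$c_{i,j;k}:=\sum_{t=0}^{\min(k+j-i,\,n-i)}(-1)^te^{(n)}_th^{(n)}_{k+j-i-t},$$ which is $0$ if $k<i-j$ and $1$ if $k=i-j$.
   Context: $\Bbbk$ is a field of characteristic $\neq2$. $OPol_n$ is the graded superalgebra generated by odd degree-2 elements $x_1,\dots,x_n$ with $x_jx_i=-x_ix_j$ ($i\ne j$). $e_r^{(n)}:=\sum_{1\le i_1<\cdots<i_r\le n}x_{i_1}\cdots x_{i_r}$ and $h_r^{(n)}:=\sum_{n\ge i_r\ge\cdots\ge i_1\ge1}x_{i_r}\cdots x_{i_1}$ for $r\ge0$, with $e_0^{(n)}=h_0^{(n)}=1$, and $h^{(n)}_r:=0$ for $r<0$. *)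

From HB Require Import structures.
From mathcomp Require Import all_boot all_order all_algebra.
Set Implicit Arguments. Unset Strict Implicit. Unset Printing Implicit Defensive.
Import Order.TTheory GRing.Theory Num.Theory.
Local Open Scope ring_scope.

(* Generators x : 'I_n -> R (0-based: x i = x_{i+1}) of a ring R satisfying the
   defining relations of OPol_n: x_j x_i = - x_i x_j for i <> j. *)
Definition anticommuting (R : pzRingType) (n : nat) (x : 'I_n -> R) : Prop :=
  forall i j : 'I_n, i != j -> x j * x i = - (x i * x j).

Definition esym (R : pzRingType) (n : nat) (x : 'I_n -> R) (r : nat) : R :=
  \sum_(t : r.-tuple 'I_n | sorted (fun a b : 'I_n => (a < b)%N) t)
     \prod_(i <- t) x i.

Definition hsym (R : pzRingType) (n : nat) (x : 'I_n -> R) (r : nat) : R :=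
  \sum_(t : r.-tuple 'I_n | sorted (fun a b : 'I_n => (b <= a)%N) t)
     \prod_(i <- t) x i.

(* c_{i,j;k} with 1-based i, j; empty sum (=0) when k + j - i < 0. *)
Definition cijk (R : pzRingType) (n : nat) (x : 'I_n -> R) (i j k : nat) : R :=
  if (k + j < i)%N then 0
  else \sum_(0 <= t < (minn (k + j - i) (n - i)).+1)
         (-1) ^+ t * esym x t * hsym x (k + j - i - t).

(* The non-commutative companion matrix (0-based indices):
   entry (i, n-1) = (-1)^(n-1-i) e_{n-i}, entry (j+1, j) = 1, others 0. *)
Definition companion (R : pzRingType) (n : nat) (x : 'I_n -> R) : 'M[R]_n :=
  \matrix_(i < n, j < n)
    if (j == n.-1 :> nat) then (-1) ^+ (n.-1 - i) * esym x (n - i)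
    else if (i == j.+1 :> nat) then 1 else 0.

Definition mxpow (R : pzRingType) (n : nat) (A : 'M[R]_n) (k : nat) : 'M[R]_n :=
  iter k (fun M => M *m A) 1%:M.

From Pilot Require Import Defs.
From HB Require Import structures.
From mathcomp Require Import all_boot all_order all_algebra.
From mathcomp Require Import zify.
Import GRing.Theory.
Local Open Scope ring_scope.

(* The companion matrix C acts on rows by a shift plus a multiple of the last
   row: (C M)_i = M_(i-1) + (-1)^(n-i) e_(n+1-i) M_n.  The c_(i,j;k) satisfy the
   same recursion c_(i,j;k+1) = c_(i-1,j;k) + (-1)^(n-i) e_(n+1-i) c_(n,j;k) term by
   term, so it remains to check c_(i,j;0) = [i = j] and the boundary value
   c_(0,j;k) = 0.  Both are instances of sum_t (-1)^t e_t h_(m-t) = [m = 0], i.e.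
   E(-t) H(t) = 1 for E(t) = (1 + x_1 t)...(1 + x_n t) and
   H(t) = (1 - x_n t)^-1...(1 - x_1 t)^-1.  This telescopes when the variables are
   added one at a time: E_(c+1)(-t) = E_c(-t) (1 - x_(c+1) t) and
   (1 - x_(c+1) t) H_(c+1)(t) = H_c(t). *)

Lemma sorted_rcons (T : Type) (e : rel T) (s : seq T) (a : T) :
  transitive e -> sorted e (rcons s a) = all (e^~ a) s && sorted e s.
Proof.
move=> e_tr; rewrite -[rcons s a]revK rev_rcons rev_sorted /=.
by rewrite (path_sortedE (rev_trans e_tr)) all_rev rev_sorted.
Qed.

Lemma big_ord_le_minn (V : nmodType) (F : nat -> V) N m :
  \sum_(t < N.+1 | (t <= m)%N) F t = \sum_(t < (minn m N).+1) F t.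
Proof.
have [le_mN | lt_Nm] := leqP m N; first by rewrite (big_ord_widen N.+1 F).
by apply: eq_bigl => t; rewrite (leq_trans _ (ltnW lt_Nm)) // -ltnS.
Qed.

Section TruncatedConvolution.
Context {R : pzRingType}.

(* [tshift f] is the coefficient sequence of [t * f(t)]. *)
Definition tshift (f : nat -> R) (a : nat) : R := if a is b.+1 then f b else 0.

Lemma conv_tshift (y : R) (f g : nat -> R) m :
  \sum_(a < m.+1) (f a - tshift f a * y) * g (m - a)%N
  = \sum_(a < m.+1) f a * (g (m - a)%N - y * tshift g (m - a)).
Proof.
under eq_bigr do rewrite mulrBl; under [RHS]eq_bigr do rewrite mulrBr.
rewrite !sumrB; congr (_ - _); case: m => [|m].
  by rewrite !big_ord1 /= !mul0r !mulr0.
rewrite [LHS]big_ord_recl [RHS]big_ord_recr /= subnn !mul0r !mulr0 add0r addr0.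
apply: eq_bigr => a _; have le_am : (a <= m)%N by rewrite -ltnS.
by rewrite /bump /= add1n subSS subSn //= mulrA.
Qed.

End TruncatedConvolution.

Section WordSums.
Context {R : pzRingType} {n : nat} (x : 'I_n -> R).

Definition words_sum (P : pred (seq 'I_n)) (r : nat) : R :=
  \sum_(t : r.-tuple 'I_n | P t) \prod_(i <- t) x i.

Lemma words_sum0 P : words_sum P 0 = (P [::])%:R.
Proof.
rewrite /words_sum big_mkcond (big_pred1 [tuple]) => [|t]; last first.
  by rewrite [t]tuple0; apply/esym/eqP.
by case: (P [::]); rewrite ?big_nil.
Qed.

Lemma words_sumS P r :
  words_sum P r.+1 = \sum_(a : 'I_n) x a * words_sum (fun s => P (a :: s)) r.
Proof.
rewrite /words_sum (reindex (fun p : 'I_n * r.-tuple 'I_n => [tuple of p.1 :: p.2])) /=.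
  under [RHS]eq_bigr => a _ do rewrite mulr_sumr.
  by rewrite pair_big_dep; apply: eq_big => -[a t] //= _; rewrite big_cons.
exists (fun t : r.+1.-tuple 'I_n => (thead t, [tuple of behead t])).
  by case=> a t _; rewrite /= theadE; congr (_, _); apply: val_inj.
by move=> t _; rewrite [RHS]tuple_eta; apply: val_inj.
Qed.

Lemma words_sumSr P r :
  words_sum P r.+1 = \sum_(a : 'I_n) words_sum (fun s => P (rcons s a)) r * x a.
Proof.
rewrite /words_sum (reindex (fun p : 'I_n * r.-tuple 'I_n => [tuple of rcons p.2 p.1])) /=.
  under [RHS]eq_bigr => a _ do rewrite mulr_suml.
  rewrite pair_big_dep; apply: eq_big => -[a t] //= _.
  by rewrite -cats1 big_cat /= big_seq1.
exists (fun t : r.+1.-tuple 'I_n =>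
   (last (thead t) (behead t), [tuple of belast (thead t) (behead t)])).
  case=> a t _ /=; set u := [tuple of rcons t a].
  have : rcons t a = rcons (belast (thead u) (behead u)) (last (thead u) (behead u)).
    by rewrite -lastI -[RHS](congr1 val (tuple_eta u)).
  by move/rcons_inj => [E1 E2]; congr (_, _) => //; apply: val_inj.
by move=> t _; apply: val_inj; rewrite /= -lastI [in RHS](tuple_eta t).
Qed.

Definition esym_lt (c r : nat) : R :=
  words_sum (fun s => sorted (fun a b : 'I_n => (a < b)%N) s
                      && all (fun a : 'I_n => (a < c)%N) s) r.

Definition hsym_lt (c r : nat) : R :=
  words_sum (fun s => sorted (fun a b : 'I_n => (b <= a)%N) s
                      && all (fun a : 'I_n => (a < c)%N) s) r.

Lemma esym_ltS c r : esym_lt c r.+1 = \sum_(a : 'I_n | (a < c)%N) esym_lt a r * x a.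
Proof.
rewrite /esym_lt words_sumSr [RHS]big_mkcond; apply: eq_bigr => a _.
have lt_tr : transitive (fun a b : 'I_n => (a < b)%N) by move=> ? ? ?; apply: ltn_trans.
case: ltnP => [ac | ca]; last first.
  by rewrite /words_sum big_pred0 ?mul0r // => t; rewrite all_rcons ltnNge ca /= andbF.
congr (_ * _); apply: eq_bigl => t; rewrite sorted_rcons // all_rcons ac /=.
case all_lt_a: (all _ t); rewrite ?andbF // andbT; apply: andb_idr => _.
by apply/allP => b /(allP all_lt_a) /ltn_trans; apply.
Qed.

Lemma hsym_ltS c r : hsym_lt c r.+1 = \sum_(a : 'I_n | (a < c)%N) x a * hsym_lt a.+1 r.
Proof.
rewrite /hsym_lt words_sumS [RHS]big_mkcond; apply: eq_bigr => a _.
have ge_tr : transitive (fun a b : 'I_n => (b <= a)%N).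
  by move=> ? ? ? h1 h2; apply: leq_trans h2 h1.
case: ltnP => [ac | ca]; last first.
  by rewrite /words_sum big_pred0 ?mulr0 // => t /=; rewrite ltnNge ca andbF.
congr (_ * _); rewrite /words_sum; apply: eq_bigl => t /=.
have -> : all (fun b : 'I_n => (b < a.+1)%N) t = all (fun b : 'I_n => (b <= a)%N) t.
  by apply: eq_all.
rewrite (path_sortedE ge_tr) ac [X in X && _]andbC -andbA; congr (_ && _).
by apply: andb_idr => /allP le_a; apply/allP => b /le_a /leq_ltn_trans; apply.
Qed.

Lemma esym_lt_rec (c : 'I_n) r : esym_lt c.+1 r.+1 = esym_lt c r.+1 + esym_lt c r * x c.
Proof.
rewrite !esym_ltS (bigD1 c) //= addrC; congr (_ + _); apply: eq_bigl => a.
by rewrite ltnS [RHS]ltn_neqAle andbC.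
Qed.

Lemma hsym_lt_rec (c : 'I_n) r : hsym_lt c.+1 r.+1 = hsym_lt c r.+1 + x c * hsym_lt c.+1 r.
Proof.
rewrite !hsym_ltS (bigD1 c) //= addrC; congr (_ + _); apply: eq_bigl => a.
by rewrite ltnS [RHS]ltn_neqAle andbC.
Qed.

Lemma esym_lt_deg0 c : esym_lt c 0 = 1.
Proof. exact: words_sum0. Qed.

Lemma hsym_lt_deg0 c : hsym_lt c 0 = 1.
Proof. exact: words_sum0. Qed.

Lemma hsym_lt0 r : hsym_lt 0 r = (r == 0)%:R.
Proof. by case: r => [|r]; rewrite ?hsym_lt_deg0 // hsym_ltS big_pred0. Qed.

Lemma esym_lt_eq0 c r : (c < r)%N -> esym_lt c r = 0.
Proof.
elim: r c => [|r IHr] c // lt_cr; rewrite esym_ltS big1 // => a lt_ac.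
by rewrite IHr ?mul0r // (leq_trans lt_ac).
Qed.

Lemma esym_ltn r : esym_lt n r = Defs.esym x r.
Proof.
apply: eq_bigl => t; rewrite [all _ t](_ : _ = true) ?andbT //.
by apply/allP => a _; apply: ltn_ord.
Qed.

Lemma hsym_ltn r : hsym_lt n r = hsym x r.
Proof.
apply: eq_bigl => t; rewrite [all _ t](_ : _ = true) ?andbT //.
by apply/allP => a _; apply: ltn_ord.
Qed.

Lemma esym_hsym_lt_conv c m : (c <= n)%N ->
  \sum_(a < m.+1) (-1) ^+ a * esym_lt c a * hsym_lt c (m - a) = (m == 0)%:R.
Proof.
elim: c => [_ | c IHc lt_cn].
  rewrite big_ord_recl big1 => [|a _]; last by rewrite esym_lt_eq0 // mulr0 mul0r.
  by rewrite esym_lt_deg0 hsym_lt0 subn0 expr0 !mul1r addr0.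
pose f a := (-1) ^+ a * esym_lt c a.
transitivity
  (\sum_(a < m.+1) (f a - tshift f a * x (Ordinal lt_cn)) * hsym_lt c.+1 (m - a)).
  apply: eq_bigr => -[[|a] lt_a] _; rewrite /f /= ?esym_lt_deg0 ?mul0r ?subr0 //.
  by rewrite (esym_lt_rec (Ordinal lt_cn)) exprS mulrDr !mulN1r !mulNr mulrA addrC.
rewrite (conv_tshift _ f (hsym_lt c.+1)) -(IHc (ltnW lt_cn)).
apply: eq_bigr => a _; congr (_ * _); case: (m - a)%N => [|b] /=.
  by rewrite !hsym_lt_deg0 mulr0 subr0.
by rewrite (hsym_lt_rec (Ordinal lt_cn)) addrK.
Qed.

Lemma esym0 : Defs.esym x 0 = 1.
Proof. by rewrite -esym_ltn esym_lt_deg0. Qed.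

Lemma hsym0 : hsym x 0 = 1.
Proof. by rewrite -hsym_ltn hsym_lt_deg0. Qed.

Lemma esym_eq0 r : (n < r)%N -> Defs.esym x r = 0.
Proof. by move=> lt_nr; rewrite -esym_ltn esym_lt_eq0. Qed.

Lemma esym_hsym_conv m :
  \sum_(t < m.+1) (-1) ^+ t * Defs.esym x t * hsym x (m - t) = (m == 0)%:R.
Proof.
rewrite -(esym_hsym_lt_conv n m (leqnn n)).
by apply: eq_bigr => t _; rewrite esym_ltn hsym_ltn.
Qed.

Lemma esym_hsym_conv_trunc N m : (n <= N)%N || (m <= N)%N ->
  \sum_(t < (minn m N).+1) (-1) ^+ t * Defs.esym x t * hsym x (m - t) = (m == 0)%:R.
Proof.
move=> hN; rewrite -esym_hsym_conv.
pose F t := (-1) ^+ t * Defs.esym x t * hsym x (m - t).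
change (\sum_(t < (minn m N).+1) F t = \sum_(t < m.+1) F t).
have [le_mN | lt_Nm] := leqP m N; first by [].
rewrite (big_ord_widen m.+1 F (leqW lt_Nm)) big_mkcond.
apply: eq_bigr => t _; case: ifP => // /negbT; rewrite -leqNgt => lt_Nt.
rewrite /F esym_eq0 ?mulr0 ?mul0r //; apply: leq_ltn_trans lt_Nt.
by move: hN; rewrite [(m <= N)%N]leqNgt lt_Nm orbF.
Qed.

End WordSums.

Lemma mxpowSl (R : pzRingType) n (A : 'M[R]_n) k : mxpow A k.+1 = A *m mxpow A k.
Proof.
elim: k => [|k IHk]; first by rewrite /mxpow /= mul1mx mulmx1.
by change (mxpow A k.+1 *m A = A *m (mxpow A k *m A)); rewrite IHk mulmxA.
Qed.

Section Companion.
Context {R : pzRingType} {n : nat} (x : 'I_n -> R).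

(* c_{i,j;k} for the 1-based row i, as a function of d = k + j; the guard makes
   h_r = 0 for r < 0 explicit. *)
Definition ccoef (i d : nat) : R :=
  \sum_(t < (n - i).+1)
     (-1) ^+ t * Defs.esym x t * (if (t + i <= d)%N then hsym x (d - i - t) else 0).

Lemma ccoef_gt i d : (d < i)%N -> ccoef i d = 0.
Proof.
move=> lt_di; apply: big1 => t _; rewrite ifF ?mulr0 //.
by apply/negbTE; rewrite -ltnNge ltn_addl.
Qed.

Lemma ccoefE i d : (i <= d)%N ->
  ccoef i d = \sum_(t < (minn (d - i) (n - i)).+1)
                (-1) ^+ t * Defs.esym x t * hsym x (d - i - t).
Proof.
move=> le_id; pose F t := (-1) ^+ t * Defs.esym x t * hsym x (d - i - t).
rewrite -(big_ord_le_minn _ F) big_mkcond; apply: eq_bigr => t _.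
by rewrite leq_subRL // addnC; case: ifP; rewrite ?mulr0.
Qed.

Lemma cijkE i j k : cijk x i j k = ccoef i (k + j).
Proof.
rewrite /cijk; case: ltnP => [lt_di | le_id]; first by rewrite ccoef_gt.
by rewrite ccoefE // big_mkord.
Qed.

Lemma ccoef_id i d : (d <= n)%N -> ccoef i d = (i == d)%:R.
Proof.
move=> le_dn; have [lt_di | le_id] := ltnP d i.
  by rewrite ccoef_gt // gtn_eqF.
rewrite ccoefE // esym_hsym_conv_trunc ?leq_sub2r ?orbT //.
by rewrite subn_eq0 eqn_leq le_id.
Qed.

Lemma ccoef0 d : ccoef 0 d = (d == 0)%:R.
Proof. by rewrite ccoefE // !subn0 esym_hsym_conv_trunc ?leqnn. Qed.

Lemma ccoef_shift i d : (i < n)%N ->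
  ccoef i.+1 d.+1 = ccoef i d + (-1) ^+ (n.-1 - i) * Defs.esym x (n - i) * ccoef n d.
Proof.
move=> lt_in.
have -> : ccoef n d = if (n <= d)%N then hsym x (d - n) else 0.
  by rewrite /ccoef subnn big_ord1 expr0 esym0 !mul1r add0n subn0.
rewrite {2}/ccoef -(subnSK lt_in) big_ord_recr /= -addrA.
rewrite [X in _ + X](_ : _ = 0) ?addr0; last first.
  have -> : ((n - i.+1).+1 + i = n)%N by lia.
  have -> : (d - i - (n - i.+1).+1 = d - n)%N by lia.
  have -> : (n.-1 - i = n - i.+1)%N by lia.
  by rewrite exprS mulN1r !mulNr addNr.
by apply: eq_bigr => t _; rewrite addnS ltnS subSS.
Qed.

Lemma companion_mulmx_entry (M : 'M[R]_n) (g : nat -> R) (j : 'I_n) :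
  g 0%N = 0 -> (forall l : 'I_n, M l j = g l.+1) -> forall i : 'I_n,
  (companion x *m M) i j = g i + (-1) ^+ (n.-1 - i) * Defs.esym x (n - i) * g n.
Proof.
move=> g0 Mg i; rewrite mxE; under eq_bigr => l _ do rewrite Mg mxE.
have lt_last : (n.-1 < n)%N by rewrite prednK ?(leq_ltn_trans _ (ltn_ord i)).
rewrite (bigD1 (Ordinal lt_last)) //= eqxx prednK ?(leq_ltn_trans _ (ltn_ord i)) //.
rewrite addrC; congr (_ + _).
under eq_bigr => l do rewrite -val_eqE /= => /negbTE ->.
case: i => -[|i] lt_i /=; first by rewrite big1 // => l _; rewrite mul0r.
have lt_in : (i < n)%N by apply: ltnW.
rewrite (bigD1 (Ordinal lt_in)) /= ?eqxx ?mul1r; last first.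
  by rewrite -val_eqE /= neq_ltn ltn_predRL lt_i.
rewrite big1 ?addr0 // => l /andP[_ ne_li]; rewrite ifF ?mul0r //.
by apply/negbTE; rewrite eqSS eq_sym; move: ne_li; rewrite -val_eqE.
Qed.

Lemma mxpow_companion k (i j : 'I_n) :
  mxpow (companion x) k i j = ccoef i.+1 (k + j.+1).
Proof.
elim: k i => [|k IHk] i; first by rewrite /mxpow /= mxE ccoef_id ?add0n.
rewrite mxpowSl (companion_mulmx_entry _ (ccoef^~ (k + j.+1)%N)) //.
- by rewrite addSn ccoef_shift.
- by rewrite ccoef0 addnS.
Qed.

End Companion.

Theorem mainTheorem11 (K : fieldType) (hK : ~~ (2 \in [pchar K]%R))
  (R : algType K) (n : nat) (hn : (1 <= n)%N)
  (x : 'I_n -> R) (hx : anticommuting x) :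
  forall (i j : 'I_n) (k : nat),
    mxpow (companion x) k i j = cijk x i.+1 j.+1 k
    /\ ((k + j < i)%N -> cijk x i.+1 j.+1 k = 0)
    /\ ((k + j)%N = i -> cijk x i.+1 j.+1 k = 1).
Proof.
move=> i j k; split; first by rewrite mxpow_companion cijkE.
rewrite /cijk !addnS ltnS; split=> [-> // | kj_i].
rewrite kj_i ltnn subnn min0n big_nat1.
by rewrite expr0 esym0 hsym0 !mul1r.
Qed.
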